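(* Consider the model $X\sim\mathbb{P}^X$, $\mu\mid X\sim N(m(X),A)$, $Z\mid\mu\sim N(\mu,\sigma^2)$ with $A\ge0$, $\sigma>0$, and let $(X_{n+1},\mu_{n+1},Z_{n+1})$ be a draw from it. Fix any deterministic function $\tilde m:\mathcal{X}\to\mathbb{R}$ and define $A_{\tilde m}:=\mathbb{E}_{m,A}[(\tilde m(X_{n+1})-Z_{n+1})^2]-\sigma^2$. Then $$\mathbb{E}_{m,A}\big[(t^*_{\tilde m,A_{\tilde m}}(X_{n+1},Z_{n+1})-\mu_{n+1})^2\big]=\inf_{\tilde A\ge0}\mathbb{E}_{m,A}\big[(t^*_{\tilde m,\tilde A}(X_{n+1},Z_{n+1})-\mu_{n+1})^2\big]=\frac{\sigma^2A_{\tilde m}}{\sigma^2+A_{\tilde m}}.$$ In particular, $\mathbb{E}_{m,A}[(t^*_{\tilde m,A_{\tilde m}}(X_{n+1},Z_{n+1})-\mu_{n+1})^2]\le\mathbb{E}_{m,A}[(t^*_{\tilde m,A}(X_{n+1},Z_{n+1})-\mu_{n+1})^2]$.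
   Context: For a function $\tilde m$ and $\tilde A\ge0$, $t^*_{\tilde m,\tilde A}(x,z)=\frac{\tilde A}{\sigma^2+\tilde A}z+\frac{\sigma^2}{\sigma^2+\tilde A}\tilde m(x)$. *)

From HB Require Import structures.
From mathcomp Require Import all_boot all_order all_algebra.
From mathcomp Require Import all_classical all_reals all_analysis.
Set Implicit Arguments. Unset Strict Implicit. Unset Printing Implicit Defensive.
Import Order.TTheory GRing.Theory Num.Theory.
Import numFieldNormedType.Exports.
Local Open Scope classical_set_scope.
Local Open Scope ring_scope.

(* Gaussian law N(mean, var) on R parameterized by its VARIANCE var >= 0;
   variance 0 is the point mass at the mean (the library's normal_prob is
   parameterized by the standard deviation and is not a Dirac mass at 0). *)
Definition gauss {R : realType} (mean var : R) : set R -> \bar R :=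
  if var == 0 then \d_mean else normal_prob mean (Num.sqrt var).

Definition tstar {R : realType} {T : Type} (sigma2 : R) (mt : T -> R) (At : R)
  (x : T) (z : R) : R :=
  At / (sigma2 + At) * z + sigma2 / (sigma2 + At) * mt x.

(* Expectation E_{m,A}[f(X,mu,Z)] under the hierarchical model
   X ~ PX, mu | X ~ N(m X, A), Z | mu ~ N(mu, sigma2),
   as the iterated integral against the joint law (for f >= 0). *)
Definition Emodel {R : realType} {d} {T : measurableType d}
  (PX : set T -> \bar R) (m : T -> R) (A sigma2 : R)
  (f : T -> R -> R -> \bar R) : \bar R :=
  (\int[PX]_x \int[gauss (m x) A]_mu \int[gauss mu sigma2]_z f x mu z)%E.

(* Write a := At / (sigma^2 + At) and b := sigma^2 / (sigma^2 + At). The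
   residual of the shrinkage rule is t*(X, Z) - mu = a (Z - mu) + b (mt X - mu),
   so integrating out Z | mu and then mu | X with the first two moments of the
   Gaussian gives the risk a^2 sigma^2 + b^2 (A + D), where
   D := E (mt X - m X)^2; the same computation gives
   E (mt X - Z)^2 = sigma^2 + A + D, i.e. A_mt = A + D. The risk exceeds its
   value sigma^2 B / (sigma^2 + B) at At = B := A_mt by
   sigma^4 (At - B)^2 / ((sigma^2 + At)^2 (sigma^2 + B)) >= 0.
   The analytic input is the Gaussian second moment, obtained from the
   primitive s^2 x phi_s(x) of (s^2 - x^2) phi_s(x). *)

From HB Require Import structures.
From mathcomp Require Import all_boot all_order all_algebra.
From mathcomp Require Import all_classical all_reals all_analysis.
From mathcomp Require Import ring lra measurable_realfun.
Import Order.TTheory GRing.Theory Num.Theory.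
Import numFieldNormedType.Exports.
Local Open Scope classical_set_scope.
Local Open Scope ring_scope.

Lemma measurable_fun_EFin_continuous (R : realType) (f : R -> R) (D : set R) :
  continuous f -> measurable D -> measurable_fun D (fun x => (f x)%:E).
Proof.
move=> cf mD; apply/measurable_EFinP/measurable_funTS.
exact: continuous_measurable_fun.
Qed.

Lemma derivable_continuous (R : realType) (f : R -> R) :
  (forall x : R, derivable f x 1) -> continuous f.
Proof.
by move=> df x; apply: differentiable_continuous; apply/derivable1_diffP.
Qed.

Lemma mul_expR_sqr_le (R : realType) (c x : R) : 0 < c -> 0 < x ->
  x * expR (- x ^+ 2 / c) <= c / x.
Proof.
move=> c_gt0 x_gt0.
have lt_expR : x ^+ 2 / c < expR (x ^+ 2 / c).
  by apply: lt_le_trans (expR_ge1Dx _); lra.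
rewrite mulNr expRN ler_pdivrMr ?expR_gt0// mulrAC ler_pdivlMr//.
by rewrite -expr2 -ler_pdivrMl// mulrC ltW.
Qed.

Lemma ge0_integralD_continuous (R : realType) (D : set R) (u v : R -> R) :
  measurable D -> continuous u -> continuous v ->
  (forall x, D x -> 0 <= u x) -> (forall x, D x -> 0 <= v x) ->
  (\int[lebesgue_measure]_(x in D) (u x + v x)%:E =
   \int[lebesgue_measure]_(x in D) (u x)%:E + \int[lebesgue_measure]_(x in D) (v x)%:E)%E.
Proof.
move=> mD cu cv u0 v0; under eq_integral do rewrite EFinD.
by apply: ge0_integralD => //; exact: measurable_fun_EFin_continuous.
Qed.

Lemma ge0_integralZl_continuous (R : realType) (D : set R) (k : R) (u : R -> R) :
  measurable D -> continuous u -> 0 <= k -> (forall x, D x -> 0 <= u x) ->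
  (\int[lebesgue_measure]_(x in D) (k * u x)%:E =
   k%:E * \int[lebesgue_measure]_(x in D) (u x)%:E)%E.
Proof.
move=> mD cu k0 u0; under eq_integral do rewrite EFinM.
by apply: ge0_integralZl_EFin => //; exact: measurable_fun_EFin_continuous.
Qed.

Lemma ge0_integral_itvcy_split (R : realType) (a b : R) (f : R -> R) :
  a <= b -> continuous f -> (forall x, a <= x -> 0 <= f x) ->
  (\int[lebesgue_measure]_(x in `[a, +oo[) (f x)%:E =
   \int[lebesgue_measure]_(x in `[a, b]) (f x)%:E +
   \int[lebesgue_measure]_(x in `[b, +oo[) (f x)%:E)%E.
Proof.
move=> ab cf f0.
have mf (D : set R) : measurable D -> measurable_fun D (fun x => (f x)%:E).
  exact: measurable_fun_EFin_continuous.
rewrite -integral_itv_bndo_bndc; last exact: mf.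
rewrite (@itv_bndbnd_setU _ _ _ (BLeft b)) ?bnd_simp//.
apply: ge0_integral_setU => //.
- by apply: mf; exact: measurableU.
- by move=> x [|] /=; rewrite in_itv/= => /andP[ax _]; rewrite lee_fin f0// (le_trans ab).
- apply/disj_setPS => x [/=]; rewrite !in_itv/= andbT => /andP[_ xb] bx.
  by move: xb; rewrite ltNge bx.
Qed.

Lemma normal_pdf0N (R : realType) (s x : R) : s != 0 ->
  normal_pdf 0 s (- x) = normal_pdf 0 s x.
Proof. by move=> s_neq0; rewrite normal_pdfE// /normal_fun !subr0 sqrrN. Qed.

Section gaussian_second_moment.
Variables (R : realType) (s : R).
Hypothesis s_gt0 : 0 < s.
Local Notation mu := (@lebesgue_measure R).
Local Notation e := (normal_pdf 0 s).

Let s_neq0 : s != 0. Proof. by rewrite gt_eqF. Qed.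

Let is_derive_normal_fun0 (x : R) :
  is_derive x 1 (normal_fun 0 s) (- x / s ^+ 2 * normal_fun 0 s x).
Proof.
have arg : is_derive x 1 (fun y : R => - (y - 0) ^+ 2 / (s ^+ 2 *+ 2)) (- x / s ^+ 2).
  by apply: is_derive_eq; rewrite scaler0 add0r !subr0 /GRing.scale/= mulr1; field.
by rewrite mulrC; exact: (is_derive1_comp (is_derive_expR _) arg).
Qed.

Lemma is_derive_normal_pdf0 (x : R) : is_derive x 1 e (- x / s ^+ 2 * e x).
Proof.
rewrite normal_pdfE//; have := is_derive_normal_fun0 x => dfun.
by apply: is_derive_eq; rewrite /GRing.scale/= mulrCA.
Qed.

Let G (x : R) : R := s ^+ 2 * x * e x.
Let g (x : R) : R := (s ^+ 2 - x ^+ 2) * e x.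

Let is_derive_G (x : R) : is_derive x 1 G (g x).
Proof.
have := is_derive_normal_pdf0 x.
by move=> de; rewrite /G; apply: is_derive_eq; rewrite /g /GRing.scale/= mulr1; field.
Qed.

Let derive1_G (x : R) : G^`()%classic x = g x.
Proof. by rewrite derive1E; apply: derive_val. Qed.

Let continuous_e : continuous e.
Proof. by apply: derivable_continuous => x; have [] := is_derive_normal_pdf0 x. Qed.

Let continuous_G : continuous G.
Proof. by apply: derivable_continuous => x; have [] := is_derive_G x. Qed.

Let continuous_g : continuous g.
Proof.
move=> x; apply: cvgM; last exact: continuous_e.
by apply: cvgB; [exact: cvg_cst|exact: exprn_continuous].
Qed.

Let continuous_sqr_e : continuous (fun x : R => x ^+ 2 * e x).
Proof. by move=> x; apply: cvgM; [exact: exprn_continuous|exact: continuous_e]. Qed.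

Let e_ge0 (x : R) : 0 <= e x. Proof. exact: normal_pdf_ge0. Qed.

Let mul_e_le (x : R) : 0 < x -> x * e x <= normal_peak s * ((s ^+ 2 *+ 2) / x).
Proof.
move=> x_gt0; rewrite normal_pdfE// mulrCA ler_wpM2l ?normal_peak_ge0//.
by rewrite /normal_fun subr0 mul_expR_sqr_le ?pmulrn_lgt0 ?exprn_gt0.
Qed.

Let cvgy_G : G x @[x --> +oo] --> 0.
Proof.
have inv_cvg0 : x^-1 @[x --> +oo] --> (0 : R).
  by apply/(@gtr0_cvgV0 _ _ _ _ id); [near=> x|exact: cvg_id].
have : s ^+ 2 * (normal_peak s * ((s ^+ 2 *+ 2) / x)) @[x --> +oo] --> 0.
  rewrite -(mulr0 (s ^+ 2)) -(mulr0 (normal_peak s)) -(mulr0 (s ^+ 2 *+ 2)).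
  by do 3 apply: cvgMr.
apply: squeeze_cvgr (cvg_cst 0); near=> x.
have x_gt0 : 0 < x by near: x; exact: nbhs_pinfty_gt.
rewrite /G -mulrA; apply/andP; split; first by rewrite !mulr_ge0 ?sqr_ge0 ?e_ge0 ?ltW.
by rewrite ler_pM2l ?exprn_gt0 ?mul_e_le.
Unshelve. all: by end_near.
Qed.

Let g_ge0 (x : R) : 0 <= x <= s -> 0 <= g x.
Proof.
case/andP=> x0 xs; rewrite mulr_ge0// subr_ge0.
by rewrite ler_sqr ?nnegrE// ltW.
Qed.

Let g_le0 (x : R) : s <= x -> g x <= 0.
Proof.
move=> sx; rewrite mulr_le0_ge0// subr_le0.
by rewrite ler_sqr ?nnegrE// ltW// (lt_le_trans s_gt0).
Qed.

Let integral_g_0s : (\int[mu]_(x in `[0%R, s]) (g x)%:E = (G s)%:E)%E.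
Proof.
rewrite (@continuous_FTC2 _ g G 0 s s_gt0).
- by rewrite /G mulr0 mul0r sube0.
- exact: continuous_subspaceT.
- split.
  + by move=> x _; have [] := is_derive_G x.
  + by apply/cvg_at_right_filter; exact: continuous_G.
  + by apply/cvg_at_left_filter; exact: continuous_G.
- by move=> x _; exact: derive1_G.
Qed.

Let integral_Ng_sy : (\int[mu]_(x in `[s, +oo[) (- g x)%:E = (G s)%:E)%E.
Proof.
rewrite (@ge0_continuous_FTC2y _ (fun x => - g x) (fun x => - G x) s 0).
- by rewrite sub0e EFinN oppeK.
- by move=> x sx; rewrite oppr_ge0 g_le0.
- by apply: continuous_subspaceT => x; apply: continuousN; exact: continuous_g.
- by rewrite -oppr0; apply: cvgN; exact: cvgy_G.
- by move=> x _; apply: derivableN; have [] := is_derive_G x.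
- by apply/cvg_at_right_filter; apply: cvgN; exact: continuous_G.
- move=> x _; rewrite derive1E deriveN -?derive1E ?derive1_G//.
  by have [] := is_derive_G x.
Qed.

(* [g] changes sign at [s] and the improper FTC needs an integrand of constant
   sign, hence the split of [[0, +oo[] at [s]. *)
Let integral0y_sqr_e : (\int[mu]_(x in `[0%R, +oo[) (x ^+ 2 * e x)%:E =
  \int[mu]_(x in `[0%R, +oo[) (s ^+ 2 * e x)%:E)%E.
Proof.
have cs2e : continuous (fun x => s ^+ 2 * e x).
  by move=> x; apply: cvgM; [exact: cvg_cst|exact: continuous_e].
have cNg : continuous (fun x => - g x) by move=> x; apply: cvgN; exact: continuous_g.
have s2e_ge0 x : 0 <= s ^+ 2 * e x by rewrite mulr_ge0 ?sqr_ge0.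
have sqr_e_ge0 x : 0 <= x ^+ 2 * e x by rewrite mulr_ge0 ?sqr_ge0.
rewrite !(@ge0_integral_itvcy_split _ 0 s) ?ltW//.
have -> : (\int[mu]_(x in `[0%R, s]) (s ^+ 2 * e x)%:E =
    \int[mu]_(x in `[0%R, s]) (x ^+ 2 * e x)%:E + (G s)%:E)%E.
  rewrite -integral_g_0s -ge0_integralD_continuous//.
  by apply: eq_integral => x _; rewrite /g; congr EFin; ring.
have -> : (\int[mu]_(x in `[s, +oo[) (x ^+ 2 * e x)%:E =
    \int[mu]_(x in `[s, +oo[) (s ^+ 2 * e x)%:E + (G s)%:E)%E.
  rewrite -integral_Ng_sy -ge0_integralD_continuous//; last first.
    by move=> x; rewrite /= in_itv/= andbT => sx; rewrite oppr_ge0 g_le0.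
  by apply: eq_integral => x _; rewrite /g; congr EFin; ring.
by rewrite addeA addeAC.
Qed.

Lemma integral_sqr_normal_pdf0 :
  (\int[mu]_x (x ^+ 2 * normal_pdf 0 s x)%:E = (s ^+ 2)%:E)%E.
Proof.
rewrite ge0_symfun_integralT//; last 2 first.
- by move=> x; rewrite mulr_ge0 ?sqr_ge0.
- by move=> x /=; rewrite normal_pdf0N// sqrrN.
rewrite -set_itvcy integral0y_sqr_e set_itvcy -ge0_symfun_integralT//; last 3 first.
- by move=> x; rewrite mulr_ge0 ?sqr_ge0.
- by move=> x; apply: cvgM; [exact: cvg_cst|exact: continuous_e].
- by move=> x /=; rewrite normal_pdf0N//.
by rewrite ge0_integralZl_continuous ?sqr_ge0// integral_normal_pdf mule1.
Qed.

End gaussian_second_moment.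

Lemma ge0_integral_density d (T : measurableType d) (R : realType)
    (mu : {sigma_finite_measure set T -> \bar R})
    (nu : {finite_measure set T -> \bar R}) (p : T -> R) (f : T -> \bar R) :
  measurable_fun setT p ->
  (forall A, measurable A -> nu A = \int[mu]_(x in A) (p x)%:E)%E ->
  (forall x, 0 <= f x)%E -> measurable_fun setT f ->
  (\int[nu]_x f x = \int[mu]_x (f x * (p x)%:E))%E.
Proof.
move=> mp nuE f0 mf.
have mEp : measurable_fun setT (fun x => (p x)%:E) by exact/measurable_EFinP.
have numu : nu `<< mu.
  apply/null_content_dominatesP => A mA muA0.
  by rewrite nuE// null_set_integral//; exact: measurable_funTS.
have RN_int := Radon_Nikodym_SigmaFinite.f_integrable numu.
rewrite -(Radon_Nikodym_SigmaFinite.change_of_variables numu f0 measurableT mf).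
apply: ae_eq_integral => //; try apply: emeasurable_funM => //.
- exact: measurable_int RN_int.
- apply: ae_eqe_mul2l; apply: integral_ae_eq => // A _ mA.
  by rewrite -nuE// -Radon_Nikodym_SigmaFinite.f_integral.
Qed.

Section lebesgue_integral_symmetries.
Variable R : realType.
Local Notation mu := (@lebesgue_measure R).

Lemma ge0_integralT_fold (G : R -> R) : (forall x, 0 <= G x) -> continuous G ->
  (\int[mu]_x (G x)%:E = \int[mu]_(x in `[0%R, +oo[) (G x + G (- x))%:E)%E.
Proof.
move=> G0 cG; have mG : measurable_fun [set: R] G by exact: continuous_measurable_fun.
rewrite -(setUv `[0%R, +oo[%classic) ge0_integral_setU//=; last 4 first.
- exact: measurableC.
- by apply/measurable_EFinP; rewrite setUv.
- by move=> x _; rewrite lee_fin.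
- exact/disj_setPCl.
rewrite setCitvr integral_itv_bndo_bndc; last exact/measurable_EFinP/measurable_funTS.
rewrite -{2}oppr0 ge0_integration_by_substitutionNy//; last exact: continuous_subspaceT.
rewrite ge0_integralD_continuous//.
by move=> x; apply: continuous_comp; [exact: oppr_continuous|exact: cG].
Qed.

Lemma ge0_integralT_eq_even_part (G1 G2 : R -> R) :
  (forall x, 0 <= G1 x) -> continuous G1 ->
  (forall x, 0 <= G2 x) -> continuous G2 ->
  (forall x, G1 x + G1 (- x) = G2 x + G2 (- x)) ->
  (\int[mu]_x (G1 x)%:E = \int[mu]_x (G2 x)%:E)%E.
Proof.
move=> G10 cG1 G20 cG2 G12.
rewrite !ge0_integralT_fold//; apply: eq_integral => x _; by rewrite G12.
Qed.

Lemma ge0_integralT_shift (G : R -> R) (a : R) :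
  (forall x, 0 <= G x) -> continuous G ->
  (\int[mu]_x (G x)%:E = \int[mu]_x (G (x + a))%:E)%E.
Proof.
move=> G0 cG.
have shift' : ((fun x : R => x + a)^`())%classic = cst 1.
  by apply/funext => x; rewrite derive1E; apply: derive_val; exact: is_derive_shift.
rewrite (@increasing_ge0_integration_by_substitutionT _ (fun x => x + a) G) //.
- by apply: eq_integral => x _; rewrite shift' /= mulr1.
- by move=> x y; rewrite ltrD2r.
- by rewrite shift'; exact: cst_continuous.
- by rewrite shift'; exact: is_cvg_cst.
- by rewrite shift'; exact: is_cvg_cst.
- exact: cvg_addrr_Ny.
- exact: cvg_addrr.
Qed.

End lebesgue_integral_symmetries.

(* The cross term [2 a b x] is odd and disappears once [x] and [- x] are folded. *)
Lemma integral_sqr_affine_normal_pdf0 (R : realType) (s c a b : R) : 0 < s -> 0 <= c ->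
  (\int[lebesgue_measure]_x ((c + (a * x + b) ^+ 2) * normal_pdf 0 s x)%:E =
   (c + (a ^+ 2 * s ^+ 2 + b ^+ 2))%:E)%E.
Proof.
move=> s_gt0 c_ge0; have s_neq0 : s != 0 by rewrite gt_eqF.
have cp := @continuous_normal_pdf R 0 _ s_neq0.
have p0 := @normal_pdf_ge0 R 0 s.
have cM (u : R -> R) : continuous u -> continuous (fun x => u x * normal_pdf 0 s x).
  by move=> cu x; apply: cvgM; [exact: cu|exact: cp].
have csqr_p : continuous (fun x : R => x ^+ 2 * normal_pdf 0 s x).
  by apply: cM => x; exact: exprn_continuous.
have sqr_p_ge0 x : 0 <= x ^+ 2 * normal_pdf 0 s x := mulr_ge0 (sqr_ge0 x) (p0 x).
have cb_ge0 : 0 <= c + b ^+ 2 by rewrite addr_ge0 ?sqr_ge0.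
have aM_ge0 x : 0 <= a ^+ 2 * (x ^+ 2 * normal_pdf 0 s x) :=
  mulr_ge0 (sqr_ge0 a) (sqr_p_ge0 x).
have cbM_ge0 x : 0 <= (c + b ^+ 2) * normal_pdf 0 s x := mulr_ge0 cb_ge0 (p0 x).
rewrite (@ge0_integralT_eq_even_part _ _
  (fun x => a ^+ 2 * (x ^+ 2 * normal_pdf 0 s x) + (c + b ^+ 2) * normal_pdf 0 s x)).
- rewrite ge0_integralD_continuous//; last 2 first.
  + by move=> x; apply: cvgM; [exact: cvg_cst|exact: (csqr_p x)].
  + by move=> x; apply: cvgM; [exact: cvg_cst|exact: cp].
  rewrite !ge0_integralZl_continuous ?sqr_ge0//.
  by rewrite integral_sqr_normal_pdf0// integral_normal_pdf mule1 -EFinM -EFinD addrCA.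
- by move=> x; rewrite mulr_ge0 ?addr_ge0 ?sqr_ge0.
- have caff : continuous (fun x : R => c + (a * x + b) ^+ 2).
    by apply: derivable_continuous => x; exact: ex_derive.
  by move=> x; apply: (cM _ caff).
- by move=> x; exact: addr_ge0.
- move=> x; apply: cvgD; apply: cvgM; try exact: cvg_cst; [exact: (csqr_p x)|exact: cp].
- by move=> x; rewrite !normal_pdf0N//; ring.
Qed.

Lemma normal_pdf_shift (R : realType) (mean s x : R) : s != 0 ->
  normal_pdf mean s (x + mean) = normal_pdf 0 s x.
Proof. by move=> s_neq0; rewrite !normal_pdfE// /normal_fun addrK subr0. Qed.

(* [normal_prob] is a measure on the Lebesgue type [measurableTypeR R], whereas
   [gauss] integrates it over the Borel type of [R]; pushing forward along the
   identity transports the integral. *)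
Lemma ge0_integral_normal_prob (R : realType) (m s : R) (f : R -> \bar R) :
  (forall x, 0 <= f x)%E -> measurable_fun setT f ->
  (\int[normal_prob m s : set R -> \bar R]_x f x =
   \int[lebesgue_measure]_x (f x * (normal_pdf m s x)%:E))%E.
Proof.
move=> f0 mf.
pose id_borel : measurableTypeR R -> R := id.
have mid : measurable_fun setT id_borel by move=> _ B mB; rewrite setTI.
transitivity (\int[pushforward (normal_prob m s) id_borel]_x f x)%E; first by [].
rewrite ge0_integral_pushforward// preimage_setT.
by apply: ge0_integral_density => //; exact: measurable_normal_pdf.
Qed.

Lemma integral_gauss_cst_sqr (R : realType) (mean v c a b : R) : 0 <= v -> 0 <= c ->
  (\int[gauss mean v]_z (c + (a * (z - mean) + b) ^+ 2)%:E =
   (c + (a ^+ 2 * v + b ^+ 2))%:E)%E.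
Proof.
move=> v_ge0 c_ge0.
have cq : continuous (fun z : R => c + (a * (z - mean) + b) ^+ 2).
  by apply: derivable_continuous => z; exact: ex_derive.
have mq : measurable_fun setT (fun z : R => (c + (a * (z - mean) + b) ^+ 2)%:E).
  exact: measurable_fun_EFin_continuous.
rewrite /gauss; have [->|v_neq0] := eqVneq v 0.
  by rewrite integral_dirac// diracT mul1e subrr mulr0 add0r mulr0 add0r.
have s_gt0 : 0 < Num.sqrt v by rewrite sqrtr_gt0 lt_neqAle eq_sym v_neq0.
have s_neq0 : Num.sqrt v != 0 by rewrite gt_eqF.
rewrite ge0_integral_normal_prob//; last by move=> z; rewrite lee_fin addr_ge0 ?sqr_ge0.
under eq_integral do rewrite -EFinM.
rewrite (@ge0_integralT_shift _ _ mean); last 2 first.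
- by move=> z; rewrite mulr_ge0 ?addr_ge0 ?sqr_ge0 ?normal_pdf_ge0.
- by move=> z; apply: cvgM; [exact: cq|exact: continuous_normal_pdf].
under eq_integral do rewrite addrK normal_pdf_shift//.
by rewrite integral_sqr_affine_normal_pdf0// sqr_sqrtr.
Qed.

(* The risk of [tstar s2 mt At] when [E (mt X - mu) ^+ 2 = B]. *)
Definition shrinkage_risk {R : realType} (s2 B At : R) : R :=
  (At / (s2 + At)) ^+ 2 * s2 + (s2 / (s2 + At)) ^+ 2 * B.

Lemma shrinkage_risk_diag (R : realType) (s2 B : R) : s2 + B != 0 ->
  shrinkage_risk s2 B B = s2 * B / (s2 + B).
Proof. by move=> s2B_neq0; rewrite /shrinkage_risk; field. Qed.

Lemma shrinkage_risk_ge (R : realType) (s2 B At : R) : 0 < s2 + B -> s2 + At != 0 ->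
  s2 * B / (s2 + B) <= shrinkage_risk s2 B At.
Proof.
move=> s2B_gt0 s2At_neq0; have s2B_neq0 : s2 + B != 0 by rewrite gt_eqF.
rewrite -subr_ge0.
have -> : shrinkage_risk s2 B At - s2 * B / (s2 + B) =
    (s2 * (At - B)) ^+ 2 / ((s2 + At) ^+ 2 * (s2 + B)).
  by rewrite /shrinkage_risk; field; apply/andP.
by rewrite divr_ge0 ?sqr_ge0// mulr_ge0 ?sqr_ge0 ?ltW.
Qed.

Lemma ge0_integral_cstDl d (T : measurableType d) (R : realType)
    (P : probability T R) (c : R) (f : T -> \bar R) :
  0 <= c -> (forall x, 0 <= f x)%E -> measurable_fun setT f ->
  (\int[P]_x (c%:E + f x) = c%:E + \int[P]_x f x)%E.
Proof.
move=> c_ge0 f0 mf.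
by rewrite ge0_integralD// integral_cst// [X in (_ * X)%E]probability_setT mule1.
Qed.

Section hierarchical_model.
Context {R : realType} {d : measure_display} {T : measurableType d}.
Context {PX : probability T R} {m : T -> R} {A s2 : R} {mt : T -> R}.
Hypotheses (mm : measurable_fun setT m) (mmt : measurable_fun setT mt).
Hypotheses (A_ge0 : 0 <= A) (s2_gt0 : 0 < s2).

Let s2_ge0 : 0 <= s2. Proof. exact: ltW. Qed.

Let D := (\int[PX]_x ((mt x - m x) ^+ 2)%:E)%E.

Lemma Emodel_sqr_affine_error (al be : R) :
  Emodel PX m A s2 (fun x mu z => ((al * (z - mu) + be * (mt x - mu)) ^+ 2)%:E) =
  ((al ^+ 2 * s2 + be ^+ 2 * A)%:E + (be ^+ 2)%:E * D)%E.
Proof.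
have inner x mu : (\int[gauss mu s2]_z ((al * (z - mu) + be * (mt x - mu)) ^+ 2)%:E =
    (al ^+ 2 * s2 + (- be * (mu - m x) + be * (mt x - m x)) ^+ 2)%:E)%E.
  rewrite (_ : (fun z => _) =
    (fun z => (0 + (al * (z - mu) + be * (mt x - mu)) ^+ 2)%:E)).
    by rewrite integral_gauss_cst_sqr// add0r; congr EFin; ring.
  by apply/funext => z; rewrite add0r.
have middle x : (\int[gauss (m x) A]_mu
    (al ^+ 2 * s2 + (- be * (mu - m x) + be * (mt x - m x)) ^+ 2)%:E =
    (al ^+ 2 * s2 + be ^+ 2 * A + be ^+ 2 * (mt x - m x) ^+ 2)%:E)%E.
  by rewrite integral_gauss_cst_sqr ?(mulr_ge0 (sqr_ge0 al))//; congr EFin; ring.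
transitivity (\int[PX]_x ((al ^+ 2 * s2 + be ^+ 2 * A)%:E +
    (be ^+ 2)%:E * ((mt x - m x) ^+ 2)%:E))%E.
  apply: eq_integral => x _; rewrite -EFinM -EFinD -middle.
  by congr integral; apply/funext => mu; exact: inner.
have mD : measurable_fun setT (fun x => ((mt x - m x) ^+ 2)%:E).
  by apply/measurable_EFinP; apply: measurable_funX; exact: measurable_funB.
have c_ge0 : 0 <= al ^+ 2 * s2 + be ^+ 2 * A.
  by rewrite addr_ge0// mulr_ge0// sqr_ge0.
have sqr_ge0E x : (0 <= ((mt x - m x) ^+ 2)%:E)%E by rewrite lee_fin sqr_ge0.
rewrite ge0_integral_cstDl//.
- by rewrite ge0_integralZl// lee_fin sqr_ge0.
- by move=> x; rewrite mule_ge0// lee_fin sqr_ge0.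
- exact: emeasurable_funM.
Qed.

Lemma Emodel_sqr_prediction_error :
  Emodel PX m A s2 (fun x _ z => ((mt x - z) ^+ 2)%:E) = ((s2 + A)%:E + D)%E.
Proof.
rewrite (_ : (fun x _ z => _) =
    (fun x mu z => ((-1 * (z - mu) + 1 * (mt x - mu)) ^+ 2)%:E)).
  by rewrite Emodel_sqr_affine_error sqrrN !expr1n !mul1r mul1e.
by apply/funext => x; apply/funext => mu; apply/funext => z; congr EFin; ring.
Qed.

Lemma fin_num_integral_sqr_mean_error :
  (Emodel PX m A s2 (fun x _ z => ((mt x - z) ^+ 2)%:E) < +oo)%E -> D \is a fin_num.
Proof.
have D_ge0 : (0 <= D)%E by apply: integral_ge0 => x _; rewrite lee_fin sqr_ge0.
rewrite Emodel_sqr_prediction_error ge0_fin_numE//; apply: le_lt_trans.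
by rewrite lee_paddl// lee_fin addr_ge0.
Qed.

Lemma Emodel_tstar_risk (At : R) : s2 + At != 0 -> D \is a fin_num ->
  Emodel PX m A s2 (fun x mu z => ((tstar s2 mt At x z - mu) ^+ 2)%:E) =
  (shrinkage_risk s2 (A + fine D) At)%:E.
Proof.
move=> s2At_neq0 D_fin.
rewrite (_ : (fun x mu z => _) = (fun x mu z =>
    ((At / (s2 + At) * (z - mu) + s2 / (s2 + At) * (mt x - mu)) ^+ 2)%:E)).
  rewrite Emodel_sqr_affine_error -{1}[D]fineK// -EFinM -EFinD.
  by congr EFin; rewrite /shrinkage_risk; ring.
apply/funext => x; apply/funext => mu; apply/funext => z.
by rewrite /tstar; congr (EFin (_ ^+ 2)); field.
Qed.

End hierarchical_model.

Theorem proposition1 (R : realType) (d : measure_display) (T : measurableType d)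
  (PX : probability T R) (m : T -> R) (A sigma : R) (mt : T -> R) :
  measurable_fun setT m -> measurable_fun setT mt ->
  0 <= A -> 0 < sigma ->
  (Emodel PX m A (sigma ^+ 2) (fun x _ z => ((mt x - z) ^+ 2)%:E) < +oo)%E ->
  let Amt := fine (Emodel PX m A (sigma ^+ 2) (fun x _ z => ((mt x - z) ^+ 2)%:E))
             - sigma ^+ 2 in
  let risk := fun At : R =>
    Emodel PX m A (sigma ^+ 2)
      (fun x mu z => ((tstar (sigma ^+ 2) mt At x z - mu) ^+ 2)%:E) in
  [/\ risk Amt = ereal_inf [set risk At | At in [set At : R | 0 <= At]],
      ereal_inf [set risk At | At in [set At : R | 0 <= At]]
        = (sigma ^+ 2 * Amt / (sigma ^+ 2 + Amt))%:E
    & (risk Amt <= risk A)%E].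
Proof.
move=> mm mmt A_ge0 sigma_gt0 prediction_lty Amt risk.
have s2_gt0 : 0 < sigma ^+ 2 by rewrite exprn_gt0.
have D_fin := fin_num_integral_sqr_mean_error mm mmt A_ge0 s2_gt0 prediction_lty.
set B := A + fine (\int[PX]_x ((mt x - m x) ^+ 2)%:E)%E.
have AmtE : Amt = B.
  rewrite /Amt (Emodel_sqr_prediction_error mm mmt A_ge0 s2_gt0) -[X in (_ + X)%E]fineK//.
  by rewrite -EFinD /= /B; ring.
have B_ge0 : 0 <= B.
  by rewrite addr_ge0// fine_ge0// integral_ge0// => x _; rewrite lee_fin sqr_ge0.
have s2B_gt0 : 0 < sigma ^+ 2 + B by rewrite ltr_pwDl.
have s2At_neq0 At : 0 <= At -> sigma ^+ 2 + At != 0.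
  by move=> At0; rewrite gt_eqF// ltr_pwDl.
have riskE At : 0 <= At -> risk At = (shrinkage_risk (sigma ^+ 2) B At)%:E.
  by move=> At0; rewrite /risk Emodel_tstar_risk ?s2At_neq0.
have risk_min At : 0 <= At -> (risk Amt <= risk At)%E.
  move=> At0; rewrite !riskE ?AmtE// lee_fin shrinkage_risk_diag ?gt_eqF//.
  by rewrite shrinkage_risk_ge ?s2At_neq0.
have risk_inf : risk Amt = ereal_inf [set risk At | At in [set At : R | 0 <= At]].
  apply/eqP; rewrite eq_le ereal_inf_lbound ?andbT; last first.
    by exists Amt => //; rewrite AmtE.
  by apply/ereal_infP => _ [At At0 <-]; exact: risk_min.
split; [exact: risk_inf| |exact: risk_min].
by rewrite -risk_inf riskE AmtE// shrinkage_risk_diag ?gt_eqF.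
Qed.
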